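(* Let $\alpha$ be a unit speed Frenet curve in $\mathbb{E}^3$ and $\beta$ an osculating mate of $\alpha$. Then: (i) $\alpha$ is a plane curve if and only if $\beta$ is a plane curve; (ii) $\alpha$ is a general helix if and only if $\beta$ is a slant helix.
   Context: $\alpha:I\to\mathbb{E}^3$ is parametrized by arclength $s$, with Frenet frame $\{T,N,B\}$, curvature $\kappa>0$, torsion $\tau$. An osculating mate of $\alpha$ is a curve $\beta(s)=\int(x_1T+x_2N)ds$ with smooth $x_1,x_2$, $x_1^2+x_2^2=1$ and $\beta''\perp\mathrm{span}\{T,N\}$; $\beta$ is assumed to be a Frenet curve, unit speed in $s$, with curvature $\bar\kappa$ and torsion $\bar\tau$. A general helix is a curve whose tangent makes a constant angle with a fixed direction, equivalently $\tau/\kappa$ is constant. A slant helix is a curve whose principal normal makes a constant angle with a fixed direction, equivalently $\sigma=\frac{\kappa^2}{(\kappa^2+\tau^2)^{3/2}}\left(\frac{\tau}{\kappa}\right)'$ is constant (computed with the curve's own curvature and torsion). *)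

From Stdlib Require Import Reals.
From Coquelicot Require Import Coquelicot.
Open Scope R_scope.

Definition V3 := (R * R * R)%type.
Definition mkV (x y z : R) : V3 := (x, y, z).
Definition vx (v : V3) : R := fst (fst v).
Definition vy (v : V3) : R := snd (fst v).
Definition vz (v : V3) : R := snd v.
Definition vzero : V3 := mkV 0 0 0.
Definition vadd (u v : V3) : V3 := mkV (vx u + vx v) (vy u + vy v) (vz u + vz v).
Definition vsub (u v : V3) : V3 := mkV (vx u - vx v) (vy u - vy v) (vz u - vz v).
Definition vscal (c : R) (v : V3) : V3 := mkV (c * vx v) (c * vy v) (c * vz v).
Definition dot (u v : V3) : R := vx u * vx v + vy u * vy v + vz u * vz v.
Definition cross (u v : V3) : V3 :=
  mkV (vy u * vz v - vz u * vy v) (vz u * vx v - vx u * vz v) (vx u * vy v - vy u * vx v).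
Definition vnorm (v : V3) : R := sqrt (dot v v).

Definition inI (a b : Rbar) (s : R) : Prop := Rbar_lt a s /\ Rbar_lt s b.

Definition smooth_fun (a b : Rbar) (f : R -> R) : Prop :=
  forall (n : nat) (s : R), inI a b s -> ex_derive (Derive_n f n) s.

Definition smooth_curve (a b : Rbar) (g : R -> V3) : Prop :=
  smooth_fun a b (fun t => vx (g t)) /\
  smooth_fun a b (fun t => vy (g t)) /\
  smooth_fun a b (fun t => vz (g t)).

Definition dcurve (g : R -> V3) (s : R) : V3 :=
  mkV (Derive (fun t => vx (g t)) s) (Derive (fun t => vy (g t)) s)
      (Derive (fun t => vz (g t)) s).

(** Frenet apparatus of a unit speed curve g (parameter = arclength):
    T = g', kappa = |T'|, N = T'/kappa, B = T x N, tau = <N', B>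
    (so that T' = kappa N, N' = -kappa T + tau B, B' = -tau N). *)
Definition tangent (g : R -> V3) (s : R) : V3 := dcurve g s.
Definition curvature (g : R -> V3) (s : R) : R := vnorm (dcurve (tangent g) s).
Definition normal (g : R -> V3) (s : R) : V3 :=
  vscal (/ curvature g s) (dcurve (tangent g) s).
Definition binormal (g : R -> V3) (s : R) : V3 := cross (tangent g s) (normal g s).
Definition torsion (g : R -> V3) (s : R) : R := dot (dcurve (normal g) s) (binormal g s).

Definition unit_speed_frenet_curve (a b : Rbar) (g : R -> V3) : Prop :=
  smooth_curve a b g /\
  (forall s, inI a b s -> vnorm (dcurve g s) = 1) /\
  (forall s, inI a b s -> 0 < curvature g s).

Definition osculating_mate (a b : Rbar) (alpha beta : R -> V3) (x1 x2 : R -> R) : Prop :=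
  smooth_fun a b x1 /\ smooth_fun a b x2 /\
  (forall s, inI a b s -> x1 s ^ 2 + x2 s ^ 2 = 1) /\
  (forall s, inI a b s ->
     ex_derive (fun t => vx (beta t)) s /\ ex_derive (fun t => vy (beta t)) s /\
     ex_derive (fun t => vz (beta t)) s) /\
  (forall s, inI a b s ->
     dcurve beta s = vadd (vscal (x1 s) (tangent alpha s)) (vscal (x2 s) (normal alpha s))) /\
  (forall s, inI a b s ->
     dot (dcurve (dcurve beta) s) (tangent alpha s) = 0 /\
     dot (dcurve (dcurve beta) s) (normal alpha s) = 0).

Definition plane_curve (a b : Rbar) (g : R -> V3) : Prop :=
  exists p n : V3, n <> vzero /\ forall s, inI a b s -> dot (vsub (g s) p) n = 0.

(** General helix: the tangent makes a constant angle with a fixed direction u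
    (|u| = 1), i.e. <T, u> = cos(angle) is constant. *)
Definition general_helix (a b : Rbar) (g : R -> V3) : Prop :=
  exists (u : V3) (c : R), vnorm u = 1 /\ forall s, inI a b s -> dot (tangent g s) u = c.

Definition slant_helix (a b : Rbar) (g : R -> V3) : Prop :=
  exists (u : V3) (c : R), vnorm u = 1 /\ forall s, inI a b s -> dot (normal g s) u = c.

From Stdlib Require Import Reals Lra.
From Coquelicot Require Import Coquelicot.
Open Scope R_scope.

(* Differentiating beta' = x1 T + x2 N and using beta'' _|_ T, N gives
   beta'' = x2 tau B.  As beta is a Frenet curve, its curvature |x2 tau| never
   vanishes, so tau <> 0 everywhere and the principal normal of beta is +-B.

   (i) Neither curve is planar.  If n is normal to a plane containing alpha, then
   <T,n> = 0, hence <N,n> = 0, hence tau <B,n> = 0, so n = 0.  If n is normal to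
   a plane containing beta, then <beta'',n> = 0 gives <B,n> = 0, hence
   tau <N,n> = 0 and then kappa <T,n> = 0, so again n = 0.

   (ii) For a unit vector u, <T,u> is constant iff <N,u> = 0 (as kappa > 0) iff
   <B,u> is constant (as tau <> 0); and <N_beta,u>^2 = <B,u>^2, while a
   differentiable function with constant square is constant on an interval. *)

Ltac vsimpl := unfold dot, cross, vadd, vsub, vscal, vzero, mkV, vx, vy, vz; simpl.

Lemma dotC u v : dot u v = dot v u.
Proof. vsimpl; ring. Qed.

Lemma dotZl c v u : dot (vscal c v) u = c * dot v u.
Proof. vsimpl; ring. Qed.

Lemma dotDl v w u : dot (vadd v w) u = dot v u + dot w u.
Proof. vsimpl; ring. Qed.

Lemma dotBl v w u : dot (vsub v w) u = dot v u - dot w u.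
Proof. vsimpl; ring. Qed.

Lemma dot_ge0 u : 0 <= dot u u.
Proof. vsimpl; nra. Qed.

Lemma dot_eq0 u : dot u u = 0 -> u = vzero.
Proof.
  destruct u as [[u1 u2] u3]; vsimpl; intros h.
  assert (u1 = 0) by nra; assert (u2 = 0) by nra; assert (u3 = 0) by nra.
  subst; reflexivity.
Qed.

Lemma dot_cross_l u v : dot u (cross u v) = 0.
Proof. vsimpl; ring. Qed.

Lemma dot_cross_r u v : dot v (cross u v) = 0.
Proof. vsimpl; ring. Qed.

Lemma dot_cross_exchange u v w : dot (cross u v) w = dot u (cross v w).
Proof. vsimpl; ring. Qed.

Lemma dot_cross_rot u v w : dot (cross u v) w = dot v (cross w u).
Proof. vsimpl; ring. Qed.

Lemma dot_cross_cross u v w z :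
  dot (cross u v) (cross w z) = dot u w * dot v z - dot u z * dot v w.
Proof. vsimpl; ring. Qed.

(* Both sides equal (B x v).(B x u), with B = T x N. *)
Lemma dot_cross_frame_identity T N v u :
  dot (cross T N) (cross T N) * dot v u - dot (cross T N) v * dot (cross T N) u =
  dot v N * (dot T T * dot N u - dot T N * dot T u)
  - dot v T * (dot N T * dot N u - dot N N * dot T u).
Proof. vsimpl; ring. Qed.

Lemma orthonormal_expansion T N v u :
  dot T T = 1 -> dot N N = 1 -> dot T N = 0 ->
  dot v u = dot v T * dot T u + dot v N * dot N u
            + dot v (cross T N) * dot (cross T N) u.
Proof.
  intros hT hN hTN.
  assert (hB : dot (cross T N) (cross T N) = 1).
  { rewrite dot_cross_cross, hT, hN, hTN; ring. }
  pose proof (dot_cross_frame_identity T N v u) as e.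
  rewrite hB, hT, hN, (dotC N T), hTN, (dotC (cross T N) v) in e.
  lra.
Qed.

Lemma Rmult_eq0_reg_l x y : x <> 0 -> x * y = 0 -> y = 0.
Proof. intros hx e; destruct (Rmult_integral x y e); [contradiction | assumption]. Qed.

Lemma is_derive_Rplus (f g : R -> R) x df dg :
  is_derive f x df -> is_derive g x dg -> is_derive (fun t => f t + g t) x (df + dg).
Proof. intros; apply (is_derive_plus f g); assumption. Qed.

Lemma is_derive_Rminus (f g : R -> R) x df dg :
  is_derive f x df -> is_derive g x dg -> is_derive (fun t => f t - g t) x (df - dg).
Proof. intros; apply (is_derive_minus f g); assumption. Qed.

Lemma is_derive_val (f : R -> R) (x l l' : R) : is_derive f x l -> l = l' -> is_derive f x l'.
Proof. intros h e; subst; exact h. Qed.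

Lemma is_derive_unique2 (f : R -> R) (x l l' : R) :
  is_derive f x l -> is_derive f x l' -> l = l'.
Proof.
  intros h h'; apply is_derive_unique in h; apply is_derive_unique in h'; congruence.
Qed.

Definition is_vderive (f : R -> V3) (s : R) (d : V3) : Prop :=
  is_derive (fun t => vx (f t)) s (vx d) /\ is_derive (fun t => vy (f t)) s (vy d) /\
  is_derive (fun t => vz (f t)) s (vz d).

Lemma is_vderive_dcurve f s :
  ex_derive (fun t => vx (f t)) s -> ex_derive (fun t => vy (f t)) s ->
  ex_derive (fun t => vz (f t)) s -> is_vderive f s (dcurve f s).
Proof. intros h1 h2 h3; split; [|split]; apply Derive_correct; assumption. Qed.

Lemma is_derive_dot f h s df dh :
  is_vderive f s df -> is_vderive h s dh ->
  is_derive (fun t => dot (f t) (h t)) s (dot df (h s) + dot (f s) dh).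
Proof.
  intros (f1 & f2 & f3) (h1 & h2 & h3).
  eapply is_derive_val.
  - unfold dot.
    apply is_derive_Rplus; [apply is_derive_Rplus|]; apply Derive.is_derive_mult; eassumption.
  - unfold dot; ring.
Qed.

Lemma is_derive_dot_r f s df u :
  is_vderive f s df -> is_derive (fun t => dot (f t) u) s (dot df u).
Proof.
  intros hf.
  assert (hu : is_vderive (fun _ => u) s vzero).
  { split; [|split]; apply (is_derive_const (_ : R)). }
  eapply is_derive_val; [exact (is_derive_dot _ _ _ _ _ hf hu)|].
  rewrite (dotC (f s) vzero); vsimpl; ring.
Qed.

Lemma is_vderive_cross f h s df dh :
  is_vderive f s df -> is_vderive h s dh ->
  is_vderive (fun t => cross (f t) (h t)) s (vadd (cross df (h s)) (cross (f s) dh)).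
Proof.
  intros (f1 & f2 & f3) (h1 & h2 & h3).
  split; [|split];
    (eapply is_derive_val;
     [apply is_derive_Rminus; apply Derive.is_derive_mult; eassumption | vsimpl; ring]).
Qed.

Definition const_on (a b : Rbar) (f : R -> R) : Prop :=
  exists c, forall s, inI a b s -> f s = c.

Section OpenInterval.

Variables a b : Rbar.

Lemma inI_locally s : inI a b s -> locally s (inI a b).
Proof.
  intros Hs.
  apply (open_and (fun u : R => Rbar_lt a u) (fun u : R => Rbar_lt u b));
    [apply open_Rbar_gt | apply open_Rbar_lt | exact Hs].
Qed.

Lemma is_derive_ext_inI (f g : R -> R) s l :
  (forall t, inI a b t -> f t = g t) -> inI a b s -> is_derive g s l -> is_derive f s l.
Proof.
  intros He Hs Hd; apply (is_derive_ext_loc g f); [|exact Hd].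
  generalize (inI_locally s Hs); apply filter_imp; intros t Ht; symmetry; auto.
Qed.

Lemma is_derive_eq0_of_const (f : R -> R) c s l :
  (forall t, inI a b t -> f t = c) -> inI a b s -> is_derive f s l -> l = 0.
Proof.
  intros He Hs Hd; apply (is_derive_unique2 f s); [exact Hd|].
  apply (is_derive_ext_inI f (fun _ => c)); auto.
  apply (is_derive_const c).
Qed.

Lemma inI_between s t x :
  inI a b s -> inI a b t -> Rmin s t <= x <= Rmax s t -> inI a b x.
Proof.
  intros [h1 h2] [h3 h4] [hl hr]; unfold inI.
  destruct (Rle_dec s t).
  - rewrite Rmin_left in hl by lra; rewrite Rmax_right in hr by lra; split.
    + apply (Rbar_lt_le_trans a s x); auto; simpl; lra.
    + apply (Rbar_le_lt_trans x t b); auto; simpl; lra.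
  - rewrite Rmin_right in hl by lra; rewrite Rmax_left in hr by lra; split.
    + apply (Rbar_lt_le_trans a t x); auto; simpl; lra.
    + apply (Rbar_le_lt_trans x s b); auto; simpl; lra.
Qed.

Hypothesis ab : Rbar_lt a b.

Lemma inI_inhabited : exists s, inI a b s.
Proof.
  unfold inI; destruct a as [x| |], b as [y| |]; simpl in *; try contradiction.
  - exists ((x + y) / 2); simpl; split; lra.
  - exists (x + 1); simpl; split; auto; lra.
  - exists (y - 1); simpl; split; auto; lra.
  - exists 0; simpl; split; auto.
Qed.

Lemma const_on_of_derive_eq0 (f : R -> R) :
  (forall t, inI a b t -> is_derive f t 0) -> const_on a b f.
Proof.
  intros Hd; destruct inI_inhabited as [s0 Hs0]; exists (f s0); intros s Hs.
  destruct (MVT_gen f s0 s (fun _ => 0)) as [c [_ e]]; [| |lra].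
  - intros x hx; apply Hd, (inI_between s0 s); auto; lra.
  - intros x hx; apply continuity_pt_filterlim, (ex_derive_continuous f).
    eexists; apply Hd, (inI_between s0 s); auto.
Qed.

Lemma const_on_of_sqr (f : R -> R) :
  (forall t, inI a b t -> ex_derive f t) ->
  const_on a b (fun t => f t ^ 2) -> const_on a b f.
Proof.
  intros Hd [c hc].
  destruct (Req_dec c 0) as [->|hc0].
  - exists 0; intros t Ht; specialize (hc t Ht); nra.
  - apply const_on_of_derive_eq0; intros t Ht.
    destruct (Hd t Ht) as [df hdf].
    pose proof (is_derive_eq0_of_const _ _ _ _ hc Ht (is_derive_pow f 2 t df hdf)) as e.
    assert (hft : f t <> 0) by (intros z; specialize (hc t Ht); rewrite z in hc; lra).
    assert (hdf0 : df = 0).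
    { apply (Rmult_eq0_reg_l (f t)); [exact hft | simpl in e; nra]. }
    rewrite <- hdf0; exact hdf.
Qed.

End OpenInterval.

Section FrenetFrame.

Variables (a b : Rbar) (g : R -> V3).
Hypothesis Hg : unit_speed_frenet_curve a b g.

Lemma is_vderive_curve s : inI a b s -> is_vderive g s (tangent g s).
Proof.
  destruct Hg as [(hx & hy & hz) _]; intros Hs.
  exact (is_vderive_dcurve g s (hx 0%nat s Hs) (hy 0%nat s Hs) (hz 0%nat s Hs)).
Qed.

Lemma is_vderive_tangent s : inI a b s -> is_vderive (tangent g) s (dcurve (tangent g) s).
Proof.
  destruct Hg as [(hx & hy & hz) _]; intros Hs.
  exact (is_vderive_dcurve (tangent g) s (hx 1%nat s Hs) (hy 1%nat s Hs) (hz 1%nat s Hs)).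
Qed.

Lemma is_vderive_dtangent s :
  inI a b s -> is_vderive (dcurve (tangent g)) s (dcurve (dcurve (tangent g)) s).
Proof.
  destruct Hg as [(hx & hy & hz) _]; intros Hs.
  exact (is_vderive_dcurve (dcurve (tangent g)) s (hx 2%nat s Hs) (hy 2%nat s Hs) (hz 2%nat s Hs)).
Qed.

Lemma curvature_gt0 s : inI a b s -> 0 < curvature g s.
Proof. destruct Hg as (_ & _ & hk); exact (hk s). Qed.

Lemma curvature_sqr s :
  curvature g s ^ 2 = dot (dcurve (tangent g) s) (dcurve (tangent g) s).
Proof. apply pow2_sqrt, dot_ge0. Qed.

Lemma ex_derive_curvature s : inI a b s -> ex_derive (curvature g) s.
Proof.
  intros Hs; pose proof (curvature_gt0 s Hs) as hk.
  pose proof (is_derive_dot _ _ _ _ _ (is_vderive_dtangent s Hs) (is_vderive_dtangent s Hs)) as hdd.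
  eexists; apply (is_derive_sqrt _ _ _ hdd).
  rewrite <- curvature_sqr; nra.
Qed.

Lemma is_vderive_normal s : inI a b s -> is_vderive (normal g) s (dcurve (normal g) s).
Proof.
  intros Hs; pose proof (curvature_gt0 s Hs) as hk.
  assert (hinv : ex_derive (fun t => / curvature g t) s).
  { apply ex_derive_inv; [apply ex_derive_curvature; exact Hs | lra]. }
  destruct (is_vderive_dtangent s Hs) as (h1 & h2 & h3).
  apply is_vderive_dcurve; unfold normal, vscal, mkV, vx, vy, vz in *; simpl;
    (apply (ex_derive_mult (fun t => / curvature g t)); [exact hinv | eexists; eassumption]).
Qed.

Lemma dot_dtangent s w : inI a b s ->
  dot (dcurve (tangent g) s) w = curvature g s * dot (normal g s) w.
Proof.
  intros Hs; pose proof (curvature_gt0 s Hs) as hk.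
  unfold normal; rewrite dotZl; field; lra.
Qed.

Lemma tangent_unit s : inI a b s -> dot (tangent g s) (tangent g s) = 1.
Proof.
  destruct Hg as (_ & hv & _); intros Hs.
  rewrite <- (pow2_sqrt (dot _ _)) by apply dot_ge0.
  unfold tangent; change (vnorm (dcurve g s) ^ 2 = 1); rewrite hv by exact Hs; ring.
Qed.

Lemma normal_unit s : inI a b s -> dot (normal g s) (normal g s) = 1.
Proof.
  intros Hs; pose proof (curvature_gt0 s Hs) as hk.
  unfold normal; rewrite dotZl, dotC, dotZl, <- curvature_sqr; field; lra.
Qed.

Lemma tangent_normal_orth s : inI a b s -> dot (tangent g s) (normal g s) = 0.
Proof.
  intros Hs; pose proof (curvature_gt0 s Hs) as hk.
  pose proof (is_derive_eq0_of_const a b _ _ _ _ tangent_unit Hs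
              (is_derive_dot _ _ _ _ _ (is_vderive_tangent s Hs) (is_vderive_tangent s Hs))) as e.
  rewrite (dotC (tangent g s)), dot_dtangent, (dotC (normal g s)) in e by exact Hs.
  nra.
Qed.

Lemma binormal_unit s : inI a b s -> dot (binormal g s) (binormal g s) = 1.
Proof.
  intros Hs; unfold binormal.
  rewrite dot_cross_cross, (dotC (normal g s) (tangent g s)), tangent_unit, normal_unit,
    tangent_normal_orth by exact Hs.
  ring.
Qed.

Lemma frenet_expansion s v u : inI a b s ->
  dot v u = dot v (tangent g s) * dot (tangent g s) u + dot v (normal g s) * dot (normal g s) u
            + dot v (binormal g s) * dot (binormal g s) u.
Proof.
  intros Hs.
  exact (orthonormal_expansion _ _ v u (tangent_unit s Hs) (normal_unit s Hs)
           (tangent_normal_orth s Hs)).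
Qed.

Lemma dot_dnormal_normal s : inI a b s -> dot (dcurve (normal g) s) (normal g s) = 0.
Proof.
  intros Hs.
  pose proof (is_derive_eq0_of_const a b _ _ _ _ normal_unit Hs
              (is_derive_dot _ _ _ _ _ (is_vderive_normal s Hs) (is_vderive_normal s Hs))) as e.
  rewrite (dotC (normal g s)) in e; lra.
Qed.

Lemma dot_dnormal_tangent s : inI a b s ->
  dot (dcurve (normal g) s) (tangent g s) = - curvature g s.
Proof.
  intros Hs.
  assert (horth : forall t, inI a b t -> dot (normal g t) (tangent g t) = 0).
  { intros t Ht; rewrite dotC; exact (tangent_normal_orth t Ht). }
  pose proof (is_derive_eq0_of_const a b _ _ _ _ horth Hs
              (is_derive_dot _ _ _ _ _ (is_vderive_normal s Hs) (is_vderive_tangent s Hs))) as e.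
  rewrite (dotC (normal g s)), dot_dtangent, normal_unit in e by exact Hs.
  lra.
Qed.

Lemma dot_dnormal s w : inI a b s ->
  dot (dcurve (normal g) s) w =
  - curvature g s * dot (tangent g s) w + torsion g s * dot (binormal g s) w.
Proof.
  intros Hs.
  rewrite (frenet_expansion s _ w), dot_dnormal_tangent, dot_dnormal_normal by exact Hs.
  unfold torsion; ring.
Qed.

Lemma is_derive_dot_tangent s u : inI a b s ->
  is_derive (fun t => dot (tangent g t) u) s (curvature g s * dot (normal g s) u).
Proof.
  intros Hs; eapply is_derive_val; [apply is_derive_dot_r, is_vderive_tangent, Hs|].
  apply dot_dtangent, Hs.
Qed.

Lemma is_derive_dot_normal s u : inI a b s ->
  is_derive (fun t => dot (normal g t) u) s
    (- curvature g s * dot (tangent g s) u + torsion g s * dot (binormal g s) u).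
Proof.
  intros Hs; eapply is_derive_val; [apply is_derive_dot_r, is_vderive_normal, Hs|].
  apply dot_dnormal, Hs.
Qed.

Lemma is_derive_dot_binormal s u : inI a b s ->
  is_derive (fun t => dot (binormal g t) u) s (- torsion g s * dot (normal g s) u).
Proof.
  intros Hs; eapply is_derive_val.
  { apply is_derive_dot_r, is_vderive_cross; [apply is_vderive_tangent | apply is_vderive_normal];
      exact Hs. }
  rewrite dotDl, dot_cross_exchange, dot_dtangent, dot_cross_l, dot_cross_rot, dot_dnormal,
    dot_cross_r by exact Hs.
  unfold binormal; rewrite dot_cross_cross, (dotC (normal g s) (tangent g s)), tangent_unit,
    tangent_normal_orth by exact Hs.
  ring.
Qed.

Lemma frame_coords_eq0 s n : inI a b s ->
  dot (tangent g s) n = 0 -> dot (normal g s) n = 0 -> dot (binormal g s) n = 0 ->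
  n = vzero.
Proof.
  intros Hs hT hN hB; apply dot_eq0.
  rewrite (frenet_expansion s n n), (dotC n (tangent g s)), (dotC n (normal g s)),
    (dotC n (binormal g s)), hT, hN, hB by exact Hs.
  ring.
Qed.

Lemma dot_normal_eq0_of_dot_tangent_const u c :
  (forall s, inI a b s -> dot (tangent g s) u = c) ->
  forall s, inI a b s -> dot (normal g s) u = 0.
Proof.
  intros hT s Hs; pose proof (curvature_gt0 s Hs) as hk.
  pose proof (is_derive_eq0_of_const a b _ _ _ _ hT Hs (is_derive_dot_tangent s u Hs)) as e.
  apply (Rmult_eq0_reg_l (curvature g s)); [lra | exact e].
Qed.

Lemma dot_normal_eq0_of_dot_binormal_const u c :
  (forall s, inI a b s -> torsion g s <> 0) ->
  (forall s, inI a b s -> dot (binormal g s) u = c) ->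
  forall s, inI a b s -> dot (normal g s) u = 0.
Proof.
  intros Htau hB s Hs.
  pose proof (is_derive_eq0_of_const a b _ _ _ _ hB Hs (is_derive_dot_binormal s u Hs)) as e.
  apply (Rmult_eq0_reg_l (- torsion g s)); [|exact e].
  intros z; apply (Htau s Hs); lra.
Qed.

Lemma plane_curve_tangent_orth :
  plane_curve a b g -> exists n, n <> vzero /\ forall s, inI a b s -> dot (tangent g s) n = 0.
Proof.
  intros (p & n & hn & hp); exists n; split; [exact hn|]; intros s Hs.
  apply (is_derive_eq0_of_const a b (fun t => dot (g t) n) (dot p n) s).
  - intros t Ht; specialize (hp t Ht); rewrite dotBl in hp; lra.
  - exact Hs.
  - apply is_derive_dot_r, is_vderive_curve, Hs.
Qed.

Hypothesis ab : Rbar_lt a b.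

Lemma not_plane_curve_of_torsion_neq0 :
  (forall s, inI a b s -> torsion g s <> 0) -> ~ plane_curve a b g.
Proof.
  intros Htau Hplane.
  destruct (plane_curve_tangent_orth Hplane) as (n & hn & hT).
  pose proof (dot_normal_eq0_of_dot_tangent_const n 0 hT) as hN.
  destruct (inI_inhabited a b ab) as [s0 Hs0].
  pose proof (is_derive_eq0_of_const a b _ _ _ _ hN Hs0 (is_derive_dot_normal s0 n Hs0)) as e.
  rewrite hT in e by exact Hs0.
  apply hn, (frame_coords_eq0 s0); auto.
  apply (Rmult_eq0_reg_l (torsion g s0)); [exact (Htau s0 Hs0) | lra].
Qed.

Lemma general_helix_iff_binormal_const :
  (forall s, inI a b s -> torsion g s <> 0) ->
  general_helix a b g <-> exists u, vnorm u = 1 /\ const_on a b (fun s => dot (binormal g s) u).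
Proof.
  intros Htau; split.
  - intros (u & c & hu & hT); exists u; split; [exact hu|].
    pose proof (dot_normal_eq0_of_dot_tangent_const u c hT) as hN.
    apply const_on_of_derive_eq0; [exact ab|]; intros s Hs.
    eapply is_derive_val; [apply is_derive_dot_binormal, Hs|].
    rewrite hN by exact Hs; ring.
  - intros (u & hu & c & hB).
    pose proof (dot_normal_eq0_of_dot_binormal_const u c Htau hB) as hN.
    destruct (const_on_of_derive_eq0 a b ab (fun s => dot (tangent g s) u)) as [c' hT].
    + intros s Hs; eapply is_derive_val; [apply is_derive_dot_tangent, Hs|].
      rewrite hN by exact Hs; ring.
    + exists u, c'; auto.
Qed.

End FrenetFrame.

Section OsculatingMate.

Variables (a b : Rbar) (alpha beta : R -> V3) (x1 x2 : R -> R).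
Hypothesis Ha : unit_speed_frenet_curve a b alpha.
Hypothesis Hm : osculating_mate a b alpha beta x1 x2.
Hypothesis Hb : unit_speed_frenet_curve a b beta.

Lemma mate_ddbeta_binormal s : inI a b s ->
  dot (dcurve (dcurve beta) s) (binormal alpha s) = x2 s * torsion alpha s.
Proof.
  destruct Hm as (sx1 & sx2 & _ & _ & hbeta' & _); intros Hs.
  set (u := binormal alpha s).
  pose proof (is_derive_dot_r _ _ _ u (is_vderive_tangent a b beta Hb s Hs)) as hd.
  apply (is_derive_unique2 (fun t => dot (dcurve beta t) u) s); [exact hd|].
  eapply is_derive_val.
  - apply (is_derive_ext_inI a b _
             (fun t => x1 t * dot (tangent alpha t) u + x2 t * dot (normal alpha t) u));
      [intros t Ht; rewrite hbeta', dotDl, !dotZl by exact Ht; reflexivity | exact Hs |].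
    apply is_derive_Rplus; apply Derive.is_derive_mult;
      [apply Derive_correct, (sx1 0%nat s Hs) | apply (is_derive_dot_tangent a b alpha Ha s u Hs)
      |apply Derive_correct, (sx2 0%nat s Hs) | apply (is_derive_dot_normal a b alpha Ha s u Hs)].
  - unfold u, binormal.
    rewrite dot_cross_l, dot_cross_r.
    change (cross (tangent alpha s) (normal alpha s)) with (binormal alpha s).
    rewrite (binormal_unit a b alpha Ha s Hs); ring.
Qed.

Lemma mate_dot_ddbeta s u : inI a b s ->
  dot (dcurve (dcurve beta) s) u = x2 s * torsion alpha s * dot (binormal alpha s) u.
Proof.
  destruct Hm as (_ & _ & _ & _ & _ & hperp); intros Hs.
  destruct (hperp s Hs) as [hT hN].
  rewrite (frenet_expansion a b alpha Ha s _ u), hT, hN, mate_ddbeta_binormal by exact Hs.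
  ring.
Qed.

Lemma mate_curvature_sqr s : inI a b s ->
  curvature beta s ^ 2 = (x2 s * torsion alpha s) ^ 2.
Proof.
  intros Hs; rewrite curvature_sqr.
  change (dcurve (tangent beta) s) with (dcurve (dcurve beta) s).
  rewrite mate_dot_ddbeta, (dotC (binormal alpha s)), mate_dot_ddbeta,
    (binormal_unit a b alpha Ha s Hs) by exact Hs.
  ring.
Qed.

Lemma mate_x2_torsion_neq0 s : inI a b s -> x2 s * torsion alpha s <> 0.
Proof.
  intros Hs z; pose proof (mate_curvature_sqr s Hs) as e.
  pose proof (curvature_gt0 a b beta Hb s Hs) as hk.
  rewrite z in e; nra.
Qed.

Lemma mate_torsion_neq0 s : inI a b s -> torsion alpha s <> 0.
Proof. intros Hs z; apply (mate_x2_torsion_neq0 s Hs); rewrite z; ring. Qed.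

Lemma mate_dot_normal_sqr s u : inI a b s ->
  dot (normal beta s) u ^ 2 = dot (binormal alpha s) u ^ 2.
Proof.
  intros Hs; pose proof (curvature_gt0 a b beta Hb s Hs) as hk.
  unfold normal; rewrite dotZl.
  change (dcurve (tangent beta) s) with (dcurve (dcurve beta) s).
  rewrite mate_dot_ddbeta by exact Hs.
  replace ((/ curvature beta s * (x2 s * torsion alpha s * dot (binormal alpha s) u)) ^ 2)
    with ((x2 s * torsion alpha s) ^ 2 / curvature beta s ^ 2 * dot (binormal alpha s) u ^ 2)
    by (field; lra).
  rewrite <- mate_curvature_sqr by exact Hs; field; lra.
Qed.

Hypothesis ab : Rbar_lt a b.

Lemma mate_not_plane_curve : ~ plane_curve a b beta.
Proof.
  intros Hplane.
  destruct (plane_curve_tangent_orth a b beta Hb Hplane) as (n & hn & hT).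
  assert (hB : forall t, inI a b t -> dot (binormal alpha t) n = 0).
  { intros t Ht.
    pose proof (is_derive_eq0_of_const a b _ _ _ _ hT Ht
                (is_derive_dot_r _ _ _ n (is_vderive_tangent a b beta Hb t Ht))) as e.
    rewrite mate_dot_ddbeta in e by exact Ht.
    apply (Rmult_eq0_reg_l (x2 t * torsion alpha t));
      [exact (mate_x2_torsion_neq0 t Ht) | exact e]. }
  pose proof (dot_normal_eq0_of_dot_binormal_const a b alpha Ha n 0 mate_torsion_neq0 hB) as hN.
  destruct (inI_inhabited a b ab) as [s0 Hs0].
  pose proof (is_derive_eq0_of_const a b _ _ _ _ hN Hs0
                (is_derive_dot_normal a b alpha Ha s0 n Hs0)) as e.
  rewrite hB in e by exact Hs0.
  pose proof (curvature_gt0 a b alpha Ha s0 Hs0) as hk.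
  apply hn, (frame_coords_eq0 a b alpha Ha s0); auto.
  apply (Rmult_eq0_reg_l (curvature alpha s0)); lra.
Qed.

Lemma slant_helix_mate_iff :
  slant_helix a b beta <->
  exists u, vnorm u = 1 /\ const_on a b (fun s => dot (binormal alpha s) u).
Proof.
  split.
  - intros (u & c & hu & hN); exists u; split; [exact hu|].
    apply const_on_of_sqr; [exact ab| |].
    + intros t Ht; eexists; apply (is_derive_dot_binormal a b alpha Ha t u Ht).
    + exists (c ^ 2); intros t Ht; rewrite <- mate_dot_normal_sqr, hN by exact Ht; reflexivity.
  - intros (u & hu & c & hB).
    destruct (const_on_of_sqr a b ab (fun t => dot (normal beta t) u)) as [c' hN].
    + intros t Ht; eexists; apply (is_derive_dot_normal a b beta Hb t u Ht).
    + exists (c ^ 2); intros t Ht; rewrite mate_dot_normal_sqr, hB by exact Ht; reflexivity.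
    + exists u, c'; auto.
Qed.

End OsculatingMate.

Theorem corollary5 (a b : Rbar) (alpha beta : R -> V3) (x1 x2 : R -> R) :
  Rbar_lt a b ->
  unit_speed_frenet_curve a b alpha ->
  osculating_mate a b alpha beta x1 x2 ->
  unit_speed_frenet_curve a b beta ->
  (plane_curve a b alpha <-> plane_curve a b beta) /\
  (general_helix a b alpha <-> slant_helix a b beta).
Proof.
  intros ab Ha Hm Hb.
  pose proof (mate_torsion_neq0 a b alpha beta x1 x2 Ha Hm Hb) as Htau.
  split.
  - split; intros Hplane; exfalso.
    + exact (not_plane_curve_of_torsion_neq0 a b alpha Ha ab Htau Hplane).
    + exact (mate_not_plane_curve a b alpha beta x1 x2 Ha Hm Hb ab Hplane).
  - rewrite (general_helix_iff_binormal_const a b alpha Ha ab Htau),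
      (slant_helix_mate_iff a b alpha beta x1 x2 Ha Hm Hb ab).
    reflexivity.
Qed.
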